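(* Let $\mathcal{A}$ be a resolver-trim history-deterministic generalised Büchi automaton with $n_{\mathcal{A}}$ states. If there exists a deterministic Büchi automaton $\mathcal{B}$ with $n_{\mathcal{B}}$ states such that $\mathcal{L}(\mathcal{B})=\mathcal{L}(\mathcal{A})$, then $\mathcal{A}$ can be recoloured to obtain a resolver-trim history-deterministic generalised Büchi automaton recognising $\mathcal{L}(\mathcal{A})$, with $n_{\mathcal{A}}$ states and using at most $n_{\mathcal{A}}n_{\mathcal{B}}$ output colours.
   Context: An automaton is a tuple $(Q,\Sigma,q_{\mathrm{init}},\Delta,\Gamma,\mathrm{col},W)$ with finite state set, finite input alphabet $\Sigma$, initial state, transitions $\Delta\subseteq Q\times\Sigma\times Q$, output alphabet $\Gamma$, labelling $\mathrm{col}:\Delta\to\Gamma$, acceptance condition $W\subseteq\Gamma^\omega$. A run on $w=a_1a_2\cdots$ is a sequence $(q_0,a_1,q_1)(q_1,a_2,q_2)\cdots$ of transitions with $q_0=q_{\mathrm{init}}$, accepting if its label sequence is in $W$; $\mathcal{L}(\mathcal{A})$ is the set of words with an accepting run. A generalised Büchi automaton with finite output colour set $C$ has $\Gamma=2^C$ and $W=\{x : \text{every } c\in C \text{ occurs in infinitely many letters of } x\}$; a Büchi automaton is the case $|C|=1$. Deterministic: for each $(p,a)$ at most one $q$ with $(p,a,q)\in\Delta$. A resolver is a map $\sigma:\Sigma^+\to\Delta$ such that for every $w=a_0a_1\cdots$, the run $\rho_\sigma(w)=\sigma(a_0)\sigma(a_0a_1)\cdots$ is a run on $w$, accepting whenever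 $w\in\mathcal{L}(\mathcal{A})$; history-deterministic means a resolver exists. A history-deterministic automaton is resolver-trim if it has a resolver $\sigma$ such that every state $q$ is visited by some accepting run of the form $\rho_\sigma(w)$. Recolouring a generalised (co)Büchi automaton with $k'$ colours means replacing its colour set and labelling by a colour set of size $k'$ and a new labelling, keeping the same states, initial state and transitions, without changing the recognised language. *)

From mathcomp Require Import all_boot.
Set Implicit Arguments. Unset Strict Implicit. Unset Printing Implicit Defensive.

(* A generalised Büchi automaton (Q, Sigma, q_init, Delta, 2^C, col, W_C).
   The labelling is given as a total function on Q*Sigma*Q; only its values
   on transitions in Delta matter. *)
Record GBA (Sigma : finType) := {
  st : finType;
  init : st;
  delta : st -> Sigma -> st -> bool;
  Col : finType;
  col : st -> Sigma -> st -> {set Col}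
}.

Arguments st {Sigma} g.
Arguments init {Sigma} g.
Arguments delta {Sigma} g _ _ _.
Arguments Col {Sigma} g.
Arguments col {Sigma} g _ _ _.

Unset Implicit Arguments.

Definition word (Sigma : Type) := nat -> Sigma.

Section Defs.
Context {Sigma : finType}.
Implicit Types (A : GBA Sigma) (w : word Sigma).

Definition is_run A w (t : nat -> st A * Sigma * st A) : Prop :=
  (t 0).1.1 = init A /\
  forall i, [/\ (t i).1.2 = w i, delta A (t i).1.1 (t i).1.2 (t i).2
             & (t i).2 = (t i.+1).1.1].

Definition accepting A (t : nat -> st A * Sigma * st A) : Prop :=
  forall (c : Col A) (N : nat), exists i, N <= i /\
    c \in col A (t i).1.1 (t i).1.2 (t i).2.

Definition lang A w : Prop := exists t, is_run A w t /\ accepting A t.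

Definition deterministic A : Prop :=
  forall p a q1 q2, delta A p a q1 -> delta A p a q2 -> q1 = q2.

Definition buchi A : Prop := #|Col A| = 1.

(* the run induced by a resolver sigma : Sigma^+ -> Delta;
   sigma is applied to the nonempty prefix w_0 ... w_i *)
Definition rho A (sigma : seq Sigma -> st A * Sigma * st A) w :
  nat -> st A * Sigma * st A := fun i => sigma (mkseq w i.+1).

Definition resolver A (sigma : seq Sigma -> st A * Sigma * st A) : Prop :=
  forall w, is_run A w (rho A sigma w) /\ (lang A w -> accepting A (rho A sigma w)).

Definition history_deterministic A : Prop := exists sigma, resolver A sigma.

Definition resolver_trim A : Prop :=
  exists sigma, resolver A sigma /\
    forall q : st A, exists w, accepting A (rho A sigma w) /\
      exists i, (rho A sigma w i).1.1 = q.

Definition recolour A (C' : finType) (col' : st A -> Sigma -> st A -> {set C'})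
  : GBA Sigma :=
  {| st := st A; init := init A; delta := delta A; Col := C'; col := col' |}.

End Defs.

From mathcomp Require Import all_boot boolp.

(* Give the new colour x to every state pair x of the product of A with B. Call a
   cycle of the product through x rejecting if it takes no accepting transition of
   B. The colour x is put on the transitions of A carrying some colour c_x of A that
   no rejecting cycle through x sees, or on all transitions if there is no such c_x;
   thus every run accepting for A stays accepting. Conversely, let a run of A be
   accepting for the new colours and suppose the run of B on the same word is
   eventually rejecting; then some pair x recurs infinitely often after that point.
   If c_x exists, it occurs between two visits of x, on a rejecting cycle through x.
   Otherwise the rejecting cycles through x concatenate into one seeing every colour
   of A, and looping on it gives a word accepted by A but rejected by the
   deterministic B. B has a run on every word on which A has one because, A being
   trim, every finite run of A extends to an accepting one. *)

Set Implicit Arguments. Unset Strict Implicit. Unset Printing Implicit Defensive.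

Definition inf_often (P : nat -> Prop) : Prop := forall N, exists i, N <= i /\ P i.

Definition splice (X : Type) (f : nat -> X) (i : nat) (g : nat -> X) : nat -> X :=
  fun n => if n < i then f n else g (n - i).

Lemma inf_often_shift (P : nat -> Prop) j :
  inf_often P -> inf_often (fun k => P (j + k)).
Proof.
move=> infP N; have [i [le_Ni Pi]] := infP (j + N).
by exists (i - j); rewrite leq_subRL ?subnKC // (leq_trans (leq_addr N j)).
Qed.

Lemma inf_often_splice (X : Type) (P : X -> Prop) f i g :
  inf_often (fun n => P (g n)) -> inf_often (fun n => P (splice f i g n)).
Proof.
move=> infP N; have [n [le_Nn Pn]] := infP N.
by exists (i + n); rewrite /splice ltnNge leq_addr addKn (leq_trans le_Nn (leq_addl i n)).
Qed.

Lemma inf_often_periodic (X : Type) (P : X -> Prop) (x0 : X) s j :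
  j < size s -> P (nth x0 s j) -> inf_often (fun n => P (nth x0 s (n %% size s))).
Proof.
move=> lt_js Pj N; exists (N * size s + j); split.
  by rewrite (leq_trans _ (leq_addr _ _)) // leq_pmulr // (leq_ltn_trans _ lt_js).
by rewrite modnMDl modn_small.
Qed.

Lemma not_inf_often (P : nat -> Prop) :
  ~ inf_often P -> exists N, forall i, N <= i -> ~ P i.
Proof.
move=> /existsNP [N /forallNP notP]; exists N => i le_Ni Pi.
by apply: (notP i).
Qed.

Lemma finite_inf_often (K : finType) (h : nat -> K) :
  exists x, inf_often (fun i => h i = x).
Proof.
apply: contrapT => /forallNP never.
have [M leM] := fin_all_exists (fun x => not_inf_often (never x)).
pose N := \max_x M x; apply: (leM (h N) N) => //.
exact: leq_bigmax.
Qed.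

Section Walks.
Variables (V T : Type) (src tgt : T -> V).

Definition chain (x : V) (f : nat -> T) : Prop :=
  src (f 0) = x /\ forall n, tgt (f n) = src (f n.+1).

Fixpoint walk (x : V) (s : seq T) (y : V) : Prop :=
  if s is e :: s' then src e = x /\ walk (tgt e) s' y else x = y.

Lemma walk_cat x s1 y s2 z : walk x s1 y -> walk y s2 z -> walk x (s1 ++ s2) z.
Proof.
elim: s1 x => [|e s1 IH] x /= => [-> //|[src_e w1] w2].
by split=> //; apply: IH w2.
Qed.

Lemma chain_walk x f i n :
  chain x f -> walk (src (f i)) [seq f k | k <- iota i n] (src (f (i + n))).
Proof.
move=> [_ linked]; elim: n i => [|n IH] i /=; first by rewrite addn0.
by split=> //; rewrite linked -addSnnS; apply: IH.
Qed.

Lemma walk_link x s y e0 i :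
  walk x s y -> i.+1 < size s -> tgt (nth e0 s i) = src (nth e0 s i.+1).
Proof.
elim: s x i => [|e s IH] x [|i] //= [_ ws] lt_is; last exact: IH ws _.
by case: s ws lt_is {IH} => [|e' s] //= [->].
Qed.

Lemma walk_last x s y e0 : walk x s y -> 0 < size s -> tgt (last e0 s) = y.
Proof.
elim: s x e0 => [|e s IH] x e0 //= [_ ws] _.
by case: s ws IH => [|e' s] ws IH; [exact: ws | apply: IH ws _].
Qed.

Lemma chain_periodic x s e0 :
  0 < size s -> walk x s x -> chain x (fun n => nth e0 s (n %% size s)).
Proof.
case: s => [|e s] // _ ws; split; first by rewrite mod0n; case: ws.
move=> n; have L_gt0 : 0 < size (e :: s) by [].
have -> : n.+1 %% size (e :: s) = (n %% size (e :: s)).+1 %% size (e :: s).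
  by rewrite -addn1 -modnDml addn1.
have := ltn_pmod n L_gt0; rewrite leq_eqVlt => /orP[/eqP wrap | lt_n].
  have -> : n %% size (e :: s) = (size (e :: s)).-1 := congr1 predn wrap.
  by rewrite prednK // modnn nth_last (walk_last e0 ws) //; case: ws => ->.
by rewrite (modn_small lt_n); apply: walk_link ws lt_n.
Qed.

Lemma chain_shift x f j : chain x f -> chain (src (f j)) (fun k => f (j + k)).
Proof. by move=> [_ linked]; split=> [|n]; rewrite ?addn0 // addnS. Qed.

Lemma chain_splice x f i g :
  chain x f -> chain (src (f i)) g -> chain x (splice f i g).
Proof.
move=> [f0 linked_f] [g0 linked_g]; rewrite /splice; split.
  by case: i g0 => [|i] g0 //=; rewrite g0.
move=> n; case: (ltnP n.+1 i) => [lt_n1i | le_in1]; first by rewrite ltnW.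
case: (ltnP n i) => [lt_ni | le_in]; last by rewrite subSn // linked_g.
have eq_i : i = n.+1 by apply/eqP; rewrite eqn_leq le_in1 lt_ni.
by subst i; rewrite subnn g0 linked_f.
Qed.

End Walks.

Section Runs.
Context {Sigma : finType}.
Implicit Types (A B : GBA Sigma) (w : word Sigma).

Definition tsrc (Q : Type) (e : Q * Sigma * Q) : Q := e.1.1.
Definition ttgt (Q : Type) (e : Q * Sigma * Q) : Q := e.2.
Definition colours A (e : st A * Sigma * st A) : {set Col A} := col A e.1.1 e.1.2 e.2.
#[global] Arguments colours : clear implicits.

Definition run_from A (q : st A) w (t : nat -> st A * Sigma * st A) : Prop :=
  chain (@tsrc _) (@ttgt _) q t /\
  forall n, (t n).1.2 = w n /\ delta A (t n).1.1 (t n).1.2 (t n).2.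
#[global] Arguments run_from : clear implicits.

Lemma is_runE A w t : is_run A w t <-> run_from A (init A) w t.
Proof.
split=> [[t0 steps] | [[t0 linked] steps]].
  by split; [split=> // n |move=> n]; case: (steps n).
split=> [|n]; first exact: t0.
by have [letter step] := steps n; split=> //; apply: linked.
Qed.

Lemma run_from_shift A q w t j :
  run_from A q w t -> run_from A (tsrc (t j)) (fun k => w (j + k)) (fun k => t (j + k)).
Proof. by move=> [cht steps]; split=> [|k]; [exact: chain_shift cht | apply: steps]. Qed.

Lemma run_from_splice A q w t i w' t' :
  run_from A q w t -> run_from A (tsrc (t i)) w' t' ->
  run_from A q (splice w i w') (splice t i t').
Proof.
move=> [cht steps] [cht' steps']; split; first exact: chain_splice.
by move=> n; rewrite /splice; case: ifP.
Qed.

Lemma accepting_shift A t j : accepting A t -> accepting A (fun k => t (j + k)).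
Proof. by move=> acc c; apply: inf_often_shift (acc c). Qed.

Lemma accepting_splice A t i t' : accepting A t' -> accepting A (splice t i t').
Proof. by move=> acc c; apply: (inf_often_splice (P := fun e => c \in colours A e)). Qed.

Definition trim A : Prop :=
  forall q, exists w t, [/\ is_run A w t, accepting A t & exists j, tsrc (t j) = q].

Lemma trim_prefix_lang A w t :
  trim A -> is_run A w t ->
  forall n, exists w', (forall i, i < n -> w' i = w i) /\ lang A w'.
Proof.
move=> trimA /is_runE runt n.
have [w0 [t0 [/is_runE run0 acc0 [j t0j]]]] := trimA (tsrc (t n)).
exists (splice w n (fun k => w0 (j + k))).
split=> [i lt_in | ]; first by rewrite /splice lt_in.
exists (splice t n (fun k => t0 (j + k))).
split; last exact/accepting_splice/accepting_shift.
by apply/is_runE/(run_from_splice runt); rewrite -t0j; apply: run_from_shift run0.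
Qed.

(* The default [q] is only reached on words on which [B] has no run. *)
Definition det_next B (q : st B) (a : Sigma) : st B := odflt q [pick q' | delta B q a q'].
#[global] Arguments det_next : clear implicits.

Fixpoint det_state B w n : st B :=
  if n is n'.+1 then det_next B (det_state B w n') (w n') else init B.

Definition det_run B w n : st B * Sigma * st B :=
  (det_state B w n, w n, det_state B w n.+1).

Lemma det_run_unique B w t :
  deterministic B -> is_run B w t -> forall n, t n = det_run B w n.
Proof.
move=> detB [t0 steps].
have states n : (t n).1.1 = det_state B w n.
  elim: n => [//|n IH] /=; have [letter step link] := steps n.
  rewrite -link /det_next; case: pickP => [q' step' | none]; last first.
    by have := none (t n).2; rewrite /= -IH -letter step.
  by rewrite IH letter in step; apply: detB step step'.
move=> n; have [letter _ link] := steps n; move: (states n) (states n.+1).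
by rewrite -link /det_run; case: (t n) letter => [[p a] q] /= -> -> ->.
Qed.

Lemma det_state_prefix B w w' n :
  (forall i, i < n -> w' i = w i) -> det_state B w' n = det_state B w n.
Proof.
elim: n => [//|n IH] agree /=.
by rewrite agree // IH // => i lt_in; apply: agree; apply: ltnW.
Qed.

Lemma det_run_complete B w :
  deterministic B ->
  (forall n, exists w', (forall i, i < n -> w' i = w i) /\ exists t, is_run B w' t) ->
  is_run B w (det_run B w).
Proof.
move=> detB ext; split=> // n; split=> //.
have [w' [agree [t runt]]] := ext n.+1.
have agree_n i : i < n -> w' i = w i by move=> lt_in; apply/agree/ltnW.
have [_ + _] := runt.2 n; rewrite (det_run_unique detB runt) /det_run.
by rewrite (det_state_prefix _ agree) (det_state_prefix _ agree_n) agree.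
Qed.

Lemma buchi_accepting B t :
  buchi B -> accepting B t <-> inf_often (fun i => colours B (t i) != set0).
Proof.
move=> /fintype1 [c0 all_c0]; split=> [acc N | inf c N].
  by have [i [le_Ni c0i]] := acc c0 N; exists i; split=> //; apply/set0Pn; exists c0.
have [i [le_Ni /set0Pn [c' c'i]]] := inf N.
by exists i; rewrite (all_c0 c) -(all_c0 c').
Qed.

Lemma resolver_trim_trim A : resolver_trim A -> trim A.
Proof.
move=> [sigma [res_sigma visit]] q; have [w [acc [j visit_q]]] := visit q.
by exists w, (rho A sigma w); split=> //; [case: (res_sigma w) | exists j].
Qed.

Lemma resolver_trim_recolour A (C' : finType) col' :
  (forall w, lang (recolour A C' col') w <-> lang A w) ->
  (forall t, accepting A t -> accepting (recolour A C' col') t) ->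
  resolver_trim A -> resolver_trim (recolour A C' col').
Proof.
move=> lang_eq acc_up [sigma [res_sigma visit]]; exists sigma; split.
  move=> w; have [run_w acc_w] := res_sigma w.
  by split=> // /lang_eq /acc_w; apply: acc_up.
by move=> q; have [w [acc vis]] := visit q; exists w; split=> //; apply: acc_up.
Qed.

End Runs.

Section Recolouring.
Variables (Sigma : finType) (A B : GBA Sigma).

Definition ptrans : Type := ((st A * Sigma * st A) * (st B * Sigma * st B))%type.
Definition psrc (e : ptrans) : st A * st B := (tsrc e.1, tsrc e.2).
Definition ptgt (e : ptrans) : st A * st B := (ttgt e.1, ttgt e.2).

Definition pstep (e : ptrans) : bool :=
  [&& delta A e.1.1.1 e.1.1.2 e.1.2, delta B e.2.1.1 e.2.1.2 e.2.2 & e.1.1.2 == e.2.1.2].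

Definition rejecting_step (e : ptrans) : bool := (colours B e.2 == set0) && pstep e.

Definition product_run (g : nat -> ptrans) : Prop :=
  chain psrc ptgt (init A, init B) g /\ forall n, pstep (g n).

Definition rejecting_cycle (x : st A * st B) (s : seq ptrans) : Prop :=
  walk psrc ptgt x s x /\ all rejecting_step s.

Definition rejecting_cycle_sees (x : st A * st B) (c : Col A) : Prop :=
  exists s, rejecting_cycle x s /\ has (fun e => c \in colours A e.1) s.

Definition witness (x : st A * st B) : option (Col A) :=
  [pick c | `[< ~ rejecting_cycle_sees x c >] ].

Definition recol (q : st A) (a : Sigma) (q' : st A) : {set 'I_#|{: st A * st B}|} :=
  [set i | if witness (enum_val i) is Some c then c \in col A q a q' else true].

Lemma product_run_pair w t tb :
  is_run A w t -> is_run B w tb -> product_run (fun n => (t n, tb n)).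
Proof.
move=> [t0 steps] [tb0 steps_b]; split; first split.
- by rewrite /psrc /tsrc /= t0 tb0.
- move=> n; have [_ _ link] := steps n; have [_ _ link_b] := steps_b n.
  by rewrite /ptgt /psrc /ttgt /tsrc /= link link_b.
move=> n; have [letter step _] := steps n; have [letter_b step_b _] := steps_b n.
by rewrite /pstep /= step step_b letter letter_b eqxx.
Qed.

Lemma product_run_proj g : product_run g ->
  is_run A (fun n => (g n).1.1.2) (fun n => (g n).1) /\
  is_run B (fun n => (g n).1.1.2) (fun n => (g n).2).
Proof.
move=> [[g0 linked] steps]; move: g0; rewrite /psrc => -[g0A g0B].
split; split=> // n; have := linked n; rewrite /ptgt /psrc => -[linkA linkB];
  have /and3P[stepA stepB /eqP letter] := steps n; by split.
Qed.

Hypotheses (detB : deterministic B) (buchiB : buchi B).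
Hypotheses (langBA : forall w, lang B w <-> lang A w) (trimA : trim A).

Lemma is_run_det_run w t : is_run A w t -> is_run B w (det_run B w).
Proof.
move=> runt; apply: det_run_complete detB _ => n.
have [w' [agree /langBA [tb [runtb _]]]] := trim_prefix_lang trimA runt n.
by exists w'; split=> //; exists tb.
Qed.

Lemma product_run_not_rejecting g N :
  product_run g -> accepting A (fun n => (g n).1) ->
  ~ (forall n, N <= n -> rejecting_step (g n)).
Proof.
move=> prun acc rej; have [runA runB] := product_run_proj prun.
have [tb [runtb acctb]] := (langBA _).2 (ex_intro _ _ (conj runA acc)).
have [n [le_Nn]] := (buchi_accepting _ buchiB).1 acctb N.
rewrite (det_run_unique detB runtb) -(det_run_unique detB runB).
by have /andP[/eqP -> _] := rej n le_Nn; rewrite eqxx.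
Qed.

Lemma product_run_cycle g N i j :
  product_run g -> (forall n, N <= n -> rejecting_step (g n)) ->
  N <= i -> i < j -> psrc (g i) = psrc (g j) ->
  rejecting_cycle (psrc (g i)) [seq g k | k <- iota i (j - i)].
Proof.
move=> [chg _] rej le_Ni lt_ij gij; split.
  by rewrite {2}gij -{2}(subnKC (ltnW lt_ij)); apply: chain_walk chg.
apply/allP=> _ /mapP[k + ->]; rewrite mem_iota => /andP[le_ik _].
exact/rej/(leq_trans le_Ni).
Qed.

Lemma rejecting_cycle_cat x s1 s2 :
  rejecting_cycle x s1 -> rejecting_cycle x s2 -> rejecting_cycle x (s1 ++ s2).
Proof.
by move=> [w1 r1] [w2 r2]; split; [apply: walk_cat w1 w2 | rewrite all_cat r1].
Qed.

Lemma rejecting_cycle_all_colours x s0 :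
  0 < size s0 -> rejecting_cycle x s0 -> (forall c, rejecting_cycle_sees x c) ->
  exists s, [/\ 0 < size s, rejecting_cycle x s
               & forall c, has (fun e => c \in colours A e.1) s].
Proof.
move=> s0_gt0 cyc0 sees.
suff [s [s_gt0 cyc has_cs]] : exists s, [/\ 0 < size s, rejecting_cycle x s
    & forall c, c \in enum (Col A) -> has (fun e => c \in colours A e.1) s].
  by exists s; split=> // c; apply: has_cs; rewrite mem_enum.
elim: (enum (Col A)) => [|c cs [s [s_gt0 cyc has_cs]]]; first by exists s0.
have [s' [cyc' has_c]] := sees c; exists (s' ++ s); split.
- by rewrite size_cat addn_gt0 s_gt0 orbT.
- exact: rejecting_cycle_cat.
- by move=> d; rewrite inE has_cat => /orP[/eqP -> | /has_cs ->]; rewrite ?has_c ?orbT.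
Qed.

Lemma lasso_not_all_colours g i s :
  product_run g -> 0 < size s -> rejecting_cycle (psrc (g i)) s ->
  ~ (forall c, has (fun e => c \in colours A e.1) s).
Proof.
move=> [chg steps] s_gt0 [cyc rej_s] all_c.
pose h := splice g i (fun n => nth (g 0) s (n %% size s)).
have h_rej n : i <= n -> rejecting_step (h n).
  move=> le_in; apply: (allP rej_s).
  by rewrite /h /splice ltnNge le_in mem_nth // ltn_pmod.
apply: (@product_run_not_rejecting h i); [split | move=> c | exact: h_rej].
- exact/(chain_splice chg)/chain_periodic.
- move=> n; case: (ltnP n i) => [lt_ni | /h_rej/andP[] //].
  by rewrite /h /splice lt_ni.
have /(has_nthP (g 0))[j lt_js c_j] := all_c c.
pose P e := c \in colours A (e : ptrans).1.
exact: (inf_often_splice (P := P) g i (inf_often_periodic (P := P) lt_js c_j)).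
Qed.

Lemma witness_some x c : witness x = Some c -> ~ rejecting_cycle_sees x c.
Proof. by rewrite /witness; case: pickP => // c' /asboolP + [<-]. Qed.

Lemma witness_none x : witness x = None -> forall c, rejecting_cycle_sees x c.
Proof.
rewrite /witness; case: pickP => // none _ c.
by apply: contrapT => /asboolP; rewrite none.
Qed.

Lemma witnessed_run_lang w t :
  is_run A w t ->
  (forall x c, witness x = Some c -> inf_often (fun i => c \in colours A (t i))) ->
  lang B w.
Proof.
move=> runt witnessed; have runB := is_run_det_run runt.
exists (det_run B w); split=> //; apply/(buchi_accepting _ buchiB).
apply: contrapT => /not_inf_often [N nonempty_N].
pose g n := (t n, det_run B w n); have prun : product_run g := product_run_pair runt runB.
have rej n : N <= n -> rejecting_step (g n).
  move=> le_Nn; rewrite /rejecting_step prun.2 andbT.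
  by apply/negPn/negP; apply: nonempty_N.
have [x inf_x] := finite_inf_often (fun n => psrc (g n)).
have [i [le_Ni gi]] := inf_x N; have [j [lt_ij gj]] := inf_x i.+1.
have cycle_at k : i < k -> psrc (g k) = x ->
    rejecting_cycle x [seq g n | n <- iota i (k - i)].
  move=> lt_ik gk; rewrite -gi.
  by apply: product_run_cycle prun rej le_Ni lt_ik _; rewrite gi gk.
case wx: (witness x) => [c|].
  apply: (witness_some wx); have [m [le_im c_m]] := witnessed x c wx i.
  have [k [lt_mk gk]] := inf_x m.+1; have lt_ik := leq_ltn_trans le_im lt_mk.
  exists [seq g n | n <- iota i (k - i)]; split; first exact: cycle_at.
  by apply/hasP; exists (g m) => //; rewrite map_f // mem_iota le_im subnKC // ltnW.
have [|s [s_gt0 cyc all_c]] :=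
    rejecting_cycle_all_colours _ (cycle_at j lt_ij gj) (witness_none wx).
  by rewrite size_map size_iota subn_gt0.
by rewrite -gi in cyc; apply: lasso_not_all_colours prun s_gt0 cyc all_c.
Qed.

Lemma accepting_recolour t :
  accepting (recolour A _ recol) t <->
  forall x c, witness x = Some c -> inf_often (fun i => c \in colours A (t i)).
Proof.
split=> [acc x c wx N | witnessed k N].
  by have [i [le_Ni]] := acc (enum_rank x) N; rewrite inE enum_rankK wx; exists i.
rewrite /= /recol; case wk: (witness (enum_val k)) => [c|].
  by have [i [le_Ni c_i]] := witnessed _ _ wk N; exists i; rewrite inE wk.
by exists N; rewrite inE wk.
Qed.

Lemma accepting_recolourW t : accepting A t -> accepting (recolour A _ recol) t.
Proof. by move=> acc; apply/accepting_recolour => x c _; apply: acc. Qed.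

Lemma lang_recolour w : lang (recolour A _ recol) w <-> lang A w.
Proof.
split=> [[t [runt /accepting_recolour witnessed]] | [t [runt acc]]].
  exact/langBA/(witnessed_run_lang runt).
by exists t; split=> //; apply: accepting_recolourW.
Qed.

End Recolouring.

Arguments recol {Sigma} A B q a q'.

Theorem lemma42 (Sigma : finType) (A : GBA Sigma) :
  resolver_trim A ->
  forall B : GBA Sigma, deterministic B -> buchi B ->
  (forall w, lang B w <-> lang A w) ->
  exists (k : nat) (col' : st A -> Sigma -> st A -> {set 'I_k}),
    k <= #|st A| * #|st B| /\
    (forall w, lang (recolour A _ col') w <-> lang A w) /\
    history_deterministic (recolour A _ col') /\
    resolver_trim (recolour A _ col').
Proof.
move=> rtrimA B detB buchiB langBA.
have lang_eq := lang_recolour detB buchiB langBA (resolver_trim_trim rtrimA).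
have rtrim' := resolver_trim_recolour lang_eq (@accepting_recolourW _ A B) rtrimA.
exists #|{: st A * st B}|, (recol A B); split; first by rewrite card_prod.
split=> //; split=> //.
by have [sigma [res_sigma _]] := rtrim'; exists sigma.
Qed.
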